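(* Let $p$ be an odd prime, let $r,n\ge1$ be integers and let $a\in\mathbb{F}_{p^n}^*$. Then the function $f:\mathbb{F}_{p^n}\to\mathbb{F}_p$, $f(x)=\mathrm{Tr}_n(ax^{p^r+1})$, is not near-bent.
   Context: $\epsilon_p=e^{2\pi i/p}$, $\mathrm{Tr}_n$ is the absolute trace $\mathbb{F}_{p^n}\to\mathbb{F}_p$, $\widehat{f}(b)=\sum_{x\in\mathbb{F}_{p^n}}\epsilon_p^{f(x)-\mathrm{Tr}_n(bx)}$. A function $f:\mathbb{F}_{p^n}\to\mathbb{F}_p$ is near-bent if $|\widehat{f}(b)|^2\in\{0,p^{n+1}\}$ for all $b\in\mathbb{F}_{p^n}$. *)

From HB Require Import structures.
From mathcomp Require Import all_boot all_order all_algebra all_field.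
Set Implicit Arguments. Unset Strict Implicit. Unset Printing Implicit Defensive.
Import Order.TTheory GRing.Theory Num.Theory.
Local Open Scope ring_scope.

(* epsilon_p = e^{2 pi i / p}: p.-root (-1) is e^{i pi / p} (minimal argument),
   so its square is e^{2 pi i / p}. *)
Definition eps (p : nat) : algC := (p.-root (-1)) ^+ 2.

(* Absolute trace Tr_n : F_{p^n} -> F_p, as an element of F (it lies in the
   prime subfield). *)
Definition tr (F : finFieldType) (p n : nat) (x : F) : F :=
  \sum_(i < n) x ^+ (p ^ i).

(* The natural number k < p representing an element t of the prime subfield
   (t = k%:R); used as the exponent of eps. *)
Definition fp_val (F : finFieldType) (p : nat) (t : F) : nat :=
  odflt 0%N (omap (@nat_of_ord p) [pick k : 'I_p | (k : nat)%:R == t]).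

(* Walsh transform  hat f (b) = sum_x eps^{f(x) - Tr_n(b x)}, for f with
   values in the prime subfield F_p of F. *)
Definition walsh (F : finFieldType) (p n : nat) (f : F -> F) (b : F) : algC :=
  \sum_(x : F) eps p ^+ fp_val p (f x) * (eps p ^+ fp_val p (tr p n (b * x)))^-1.

Definition near_bent (F : finFieldType) (p n : nat) (f : F -> F) : Prop :=
  forall b : F, `|walsh p n f b| ^+ 2 = 0 \/ `|walsh p n f b| ^+ 2 = (p ^ n.+1)%:R.

From HB Require Import structures.
From mathcomp Require Import all_boot all_order all_algebra all_field.
From mathcomp Require Import ring.
Set Implicit Arguments.
Unset Strict Implicit.
Unset Printing Implicit Defensive.

Import Order.TTheory GRing.Theory Num.Theory.
Local Open Scope ring_scope.

(* Put q = p^r, Q(x) = Tr(a x^(q+1)) and L(z) = a z + a^q z^(q^2) [qlin].  Then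
   Q(z + y) = Q(y) + Q(z) + Tr(y^q L(z)), and Q vanishes on ker L, so the usual
   squaring of the Walsh coefficient at 0 gives |W(0)|^2 = p^n |ker L|.  Near-
   bentness would force |ker L| = p.  But ker L is stable under multiplication
   by every s with s^(q^2) = s, and for a nonzero z0 in ker L the element
   w = a z0^(q+1) satisfies w^q = -w, hence w^(q^2) = w and w is not in F_p
   (p is odd): the p + 1 elements s z0, s in F_p or s = w, all lie in ker L. *)

Lemma eps_prim_root (p : nat) : prime p -> p.-primitive_root (eps p).
Proof.
move=> p_pr; have p_gt1 := prime_gt1 p_pr.
pose rho := p.-root (-1 : algC).
have rhoK : rho ^+ p = -1 by rewrite /rho rootCK // ltnW.
have eps_p : eps p ^+ p = 1 by rewrite /eps -exprM mulnC exprM rhoK sqrrN expr1n.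
have [m m_prim m_dvd] := prim_order_exists (ltnW p_gt1) eps_p.
have /primeP[_ /(_ m m_dvd)/orP[/eqP m1|/eqP m_p]] := p_pr;
  last by move: m_prim; rewrite m_p.
move: m_prim; rewrite m1 => /prim_expr_order; rewrite expr1 /eps => /eqP.
rewrite sqrf_eq1 => /orP[] /eqP rho_pm1.
  move: rhoK; rewrite /rho rho_pm1 expr1n => /eqP.
  by rewrite gt_eqF // (lt_trans (ltrN10 _) ltr01).
by have := rootC_lt0 (-1 : algC) p_gt1; rewrite rho_pm1 ltrN10.
Qed.

Section CharacteristicP.
Variables (F : fieldType) (p : nat).
Hypothesis charFp : p \in [pchar F].

Let p_pr : prime p := pcharf_prime charFp.

Lemma exprDn_frob k (x y : F) : (x + y) ^+ (p ^ k) = x ^+ (p ^ k) + y ^+ (p ^ k).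
Proof.
by apply: exprDn_pchar; rewrite (eq_pnat _ (pcharf_eq charFp)) pnatX pnat_id.
Qed.

Lemma exprNn_frob k (x : F) : (- x) ^+ (p ^ k) = - x ^+ (p ^ k).
Proof.
by apply: exprNn_pchar; rewrite (eq_pnat _ (pcharf_eq charFp)) pnatX pnat_id.
Qed.

Lemma expf_frob_inj k : injective (fun x : F => x ^+ (p ^ k)).
Proof.
move=> x y /eqP; rewrite -subr_eq0 -exprNn_frob -exprDn_frob expf_eq0 subr_eq0.
by case/andP=> _ /eqP.
Qed.

Lemma natr_frob k m : (m%:R : F) ^+ (p ^ k) = m%:R.
Proof.
elim: k => [|k IHk]; first by rewrite expr1.
by rewrite expnS exprM -(pFrobenius_autE charFp) pFrobenius_aut_nat IHk.
Qed.

Lemma natf_inj_ord : injective (fun k : 'I_p => (k%:R : F)).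
Proof.
move=> k l /= eq_kl; apply: val_inj => /=.
wlog le_kl : k l eq_kl / (k <= l)%N.
  move=> W; have [le_kl|/ltnW le_lk] := leqP k l; first exact: W.
  exact: esym (W _ _ (esym eq_kl) le_lk).
have p_dvd : (p %| l - k)%N by rewrite (dvdn_pcharf charFp) natrB // eq_kl subrr.
apply/eqP; rewrite eqn_leq le_kl /= -subn_eq0; apply: contraTT p_dvd => lk_neq0.
by rewrite gtnNdvd ?lt0n // (leq_ltn_trans (leq_subr _ _)).
Qed.

(* X^p - X has at most p roots, and the p elements k%:R, k < p, are roots. *)
Lemma frob_fixedP (t : F) : t ^+ p = t -> exists k : 'I_p, t = k%:R.
Proof.
move=> tp; have [/existsP[k /eqP ->]|] := boolP [exists k : 'I_p, t == k%:R].
  by exists k.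
rewrite negb_exists => /forallP not_Fp; exfalso.
pose P : {poly F} := 'X^p - 'X.
have sizeP : size P = p.+1.
  by rewrite /P size_polyDl size_polyXn // size_polyN size_polyX ltnS prime_gt1.
have P_neq0 : P != 0 by rewrite -size_poly_eq0 sizeP.
pose rs := t :: [seq (k : nat)%:R | k : 'I_p].
suff : (size rs < size P)%N by rewrite /= size_map size_enum_ord sizeP ltnn.
apply: max_poly_roots P_neq0 _ _.
  rewrite /= {1}/root /P !hornerE tp subrr eqxx /=.
  apply/allP => _ /mapP[k _ ->]; rewrite /root /P !hornerE.
  by have := natr_frob 1 k; rewrite expn1 => ->; rewrite subrr.
rewrite /= map_inj_uniq ?enum_uniq ?andbT //; last exact: natf_inj_ord.
by apply/mapP => -[k _ t_k]; have := not_Fp k; rewrite t_k eqxx.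
Qed.

End CharacteristicP.

Section FiniteField.
Variables (F : finFieldType) (p n : nat).
Hypotheses (p_pr : prime p) (n_gt0 : (0 < n)%N) (cardF : #|F| = (p ^ n)%N).

Let charFp : p \in [pchar F] := card_finPcharP cardF p_pr.
Let p_gt0 : (0 < p)%N := prime_gt0 p_pr.
Let eps_prim : p.-primitive_root (eps p) := eps_prim_root p_pr.

Lemma trD (x y : F) : tr p n (x + y) = tr p n x + tr p n y.
Proof. by rewrite /tr -big_split; apply: eq_bigr => i _; rewrite exprDn_frob. Qed.

Lemma tr0 : tr p n (0 : F) = 0.
Proof. by apply: (addrI (tr p n (0 : F))); rewrite -trD !addr0. Qed.

Lemma trN (x : F) : tr p n (- x) = - tr p n x.
Proof. by apply/eqP; rewrite -addr_eq0 -trD addNr tr0. Qed.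

Lemma tr_expp (x : F) : tr p n (x ^+ p) = tr p n x.
Proof.
rewrite /tr; case: n n_gt0 cardF => // m _ cardF'.
rewrite big_ord_recr big_ord_recl /= -exprM -expnS -cardF' expf_card addrC.
by congr (_ + _); apply: eq_bigr => i _; rewrite -exprM -expnS.
Qed.

Lemma tr_frob k (x : F) : tr p n (x ^+ (p ^ k)) = tr p n x.
Proof.
elim: k x => [|k IHk] x; first by rewrite expr1.
by rewrite expnS exprM IHk tr_expp.
Qed.

Lemma tr_frob_fixed (x : F) : tr p n x ^+ p = tr p n x.
Proof.
rewrite -(pFrobenius_autE charFp) rmorph_sum -[RHS]tr_expp /tr.
by apply: eq_bigr => i _ /=; rewrite pFrobenius_autE -!exprM mulnC.
Qed.

(* Tr_n is a polynomial function of degree p^(n-1) < #|F|, and is nonzero as a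
   polynomial since its coefficient of X is 1. *)
Lemma tr_neq0 : exists v : F, tr p n v != 0.
Proof.
have [/existsP[v]|] := boolP [exists v : F, tr p n v != 0]; first by exists v.
rewrite negb_exists => /forallP /= tr_eq0; exfalso.
pose T : {poly F} := \sum_(i < n) 'X^(p ^ i).
have T_neq0 : T != 0.
  apply: contra_neq (oner_neq0 F) => T_eq0; rewrite -[RHS](coef0 _ 1) -T_eq0.
  rewrite /T coef_sum; case: n n_gt0 => // m _.
  rewrite big_ord_recl /= expn0 coefXn eqxx big1 ?addr0 // => i _.
  by rewrite coefXn /bump leq0n add1n ltn_eqF // -[1%N](expn0 p) ltn_exp2l ?prime_gt1.
have sizeT : (size T <= (p ^ n.-1).+1)%N.
  apply: leq_trans (size_sum _ _ _) _; apply/bigmax_leqP => i _.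
  by rewrite size_polyXn ltnS leq_pexp2l // -ltnS prednK.
have rootsT : all (root T) (enum F).
  apply/allP => x _; rewrite /root /T horner_sum.
  by under eq_bigr do rewrite hornerXn; have := tr_eq0 x; rewrite negbK.
have := leq_trans (max_poly_roots T_neq0 rootsT (enum_uniq F)) sizeT.
by rewrite -cardE cardF ltnS leqNgt -{2}(prednK n_gt0) ltn_exp2l ?prime_gt1 ?ltnSn.
Qed.

Lemma fp_val_nat m : fp_val p (m%:R : F) = (m %% p)%N.
Proof.
rewrite /fp_val; case: pickP => [k /eqP k_m|none] /=.
  have k_mod : (k%:R : F) = (Ordinal (ltn_pmod m p_gt0) : nat)%:R.
    by rewrite /= (GRing.natr_mod_pchar charFp).
  by rewrite (natf_inj_ord charFp k_mod).
have := none (Ordinal (ltn_pmod m p_gt0)).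
by rewrite /= (GRing.natr_mod_pchar charFp) eqxx.
Qed.

Definition psi (x : F) : algC := eps p ^+ fp_val p (tr p n x).

Lemma psi_tr_nat (x : F) : exists k : 'I_p, psi x = eps p ^+ k.
Proof.
have [k tr_k] := frob_fixedP charFp (tr_frob_fixed x).
by exists k; rewrite /psi tr_k fp_val_nat modn_small.
Qed.

Lemma psiD (x y : F) : psi (x + y) = psi x * psi y.
Proof.
have [k tr_k] := frob_fixedP charFp (tr_frob_fixed x).
have [l tr_l] := frob_fixedP charFp (tr_frob_fixed y).
by rewrite /psi trD tr_k tr_l -natrD !fp_val_nat !prim_expr_mod // exprD.
Qed.

Lemma psi_tr0 (x : F) : tr p n x = 0 -> psi x = 1.
Proof. by rewrite /psi => ->; rewrite (fp_val_nat 0) mod0n. Qed.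

Lemma psi0 : psi 0 = 1.
Proof. exact: psi_tr0 tr0. Qed.

Lemma norm_psi (x : F) : `|psi x| = 1.
Proof.
have [k ->] := psi_tr_nat x; apply/eqP; rewrite -(pexpr_eq1 p_gt0) // -normrX.
by rewrite -exprM mulnC exprM (prim_expr_order eps_prim) expr1n normr1.
Qed.

Lemma psi_neq0 (x : F) : psi x != 0.
Proof. by rewrite -normr_eq0 norm_psi oner_eq0. Qed.

Lemma conj_psi (x : F) : (psi x)^* = (psi x)^-1.
Proof. by rewrite invC_norm norm_psi expr1n invr1 mul1r. Qed.

Lemma psi_neq1 (x : F) : tr p n x != 0 -> psi x != 1.
Proof.
have [k tr_k] := frob_fixedP charFp (tr_frob_fixed x).
rewrite /psi tr_k fp_val_nat modn_small // -(prim_order_dvd eps_prim).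
by rewrite (dvdn_pcharf charFp).
Qed.

Lemma sum_psi_mul (C : F) :
  \sum_(u : F) psi (u * C) = if C == 0 then (p ^ n)%:R else 0.
Proof.
have [->|C_neq0] := eqVneq C 0.
  by under eq_bigr do rewrite mulr0 psi0; rewrite sumr_const cardF.
have [v tr_v] := tr_neq0; set S := \sum_u _.
have S_psi : S = psi v * S.
  rewrite {1}/S (reindex_inj (addIr (v / C))) /= mulr_sumr.
  by apply: eq_bigr => u _; rewrite mulrDl divfK // psiD mulrC.
apply/eqP; apply: contraTT (psi_neq1 tr_v) => S_neq0; rewrite negbK.
by rewrite -(inj_eq (mulIf S_neq0)) mul1r -S_psi.
Qed.

Section QuadraticForm.
Variables (r : nat) (a : F).
Hypotheses (p_odd : odd p) (a_neq0 : a != 0).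

Let q := (p ^ r)%N.
Let qq_gt0 : (0 < q * q)%N.
Proof. by rewrite muln_gt0 andbb expn_gt0 prime_gt0. Qed.

Definition qform (x : F) := a * x ^+ (q + 1).
Definition qlin (z : F) := a * z + a ^+ q * z ^+ (q * q).
Definition qradical := [set z : F | qlin z == 0].

Lemma natf2_neq0 : (2%:R : F) != 0.
Proof.
rewrite -(dvdn_pcharf charFp) dvdn_prime2 //.
by apply: contraL p_odd => /eqP ->.
Qed.

Lemma tr_qform_cross z y :
  tr p n (a * (z ^+ q * y)) = tr p n (y ^+ q * (a ^+ q * z ^+ (q * q))).
Proof.
rewrite -(tr_frob r) -/q !exprMn -exprM.
by rewrite [in RHS]mulrC -mulrA.
Qed.

Lemma tr_qformD z y :
  tr p n (qform (z + y)) = tr p n (qform y + qform z + y ^+ q * qlin z).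
Proof.
have -> : qform (z + y) = qform y + qform z + a * (y ^+ q * z) + a * (z ^+ q * y).
  by rewrite /qform !addn1 !exprSr exprDn_frob //; ring.
by rewrite trD tr_qform_cross -trD /qlin; congr tr; ring.
Qed.

Lemma psi_qformD z y :
  psi (qform (z + y)) = psi (qform y) * psi (qform z) * psi (y ^+ q * qlin z).
Proof. by rewrite -!psiD /psi tr_qformD. Qed.

Lemma qform_frob z : qlin z = 0 -> qform z ^+ q = - qform z.
Proof.
move=> /eqP; rewrite /qlin addrC addr_eq0 => /eqP qlin_z.
rewrite /qform exprMn -exprM mulnDl mul1n exprD mulrA qlin_z.
by rewrite addn1 exprS mulNr mulrA.
Qed.

Lemma tr_qform_ker z : qlin z = 0 -> tr p n (qform z) = 0.
Proof.
move=> /qform_frob qform_q; have := tr_frob r (qform z).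
rewrite -/q qform_q trN => /eqP; rewrite eq_sym -addr_eq0 -mulr2n -mulr_natr.
by rewrite mulf_eq0 (negbTE natf2_neq0) orbF => /eqP.
Qed.

Lemma sum_psi_frob_mul C :
  \sum_(y : F) psi (y ^+ q * C) = if C == 0 then (p ^ n)%:R else 0.
Proof.
by rewrite -sum_psi_mul [RHS](reindex_inj (expf_frob_inj (k := r) charFp)).
Qed.

Lemma walsh_qform0 :
  `|walsh p n (fun x => tr p n (qform x)) 0| ^+ 2 = (p ^ n * #|qradical|)%:R.
Proof.
have -> : walsh p n (fun x => tr p n (qform x)) 0 = \sum_x psi (qform x).
  apply: eq_bigr => x _.
  by rewrite mul0r -/(psi 0) psi0 invr1 mulr1.
have conj_sum : (\sum_x psi (qform x))^* = \sum_y (psi (qform y))^-1.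
  by rewrite rmorph_sum; apply: eq_bigr => y _; apply: conj_psi.
rewrite normCK conj_sum mulr_sumr.
under eq_bigr do rewrite mulr_suml.
have shift y : \sum_x psi (qform x) / psi (qform y) =
    \sum_z psi (qform z) * psi (y ^+ q * qlin z).
  rewrite (reindex_inj (addIr y)) /=; apply: eq_bigr => z _.
  by rewrite psi_qformD -!mulrA mulrC -!mulrA mulVf ?psi_neq0 ?mulr1.
under eq_bigr do rewrite shift.
rewrite exchange_big /=.
under eq_bigr do rewrite -mulr_sumr sum_psi_frob_mul.
rewrite (eq_bigr (fun z => if qlin z == 0 then (p ^ n)%:R else 0)); last first.
  move=> z _; have [qlin_z|] := eqVneq; last by rewrite mulr0.
  by rewrite psi_tr0 ?tr_qform_ker ?mul1r.
rewrite -big_mkcond sumr_const natrM mulr_natr; congr (_ *+ _).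
by apply: eq_card => z; rewrite inE.
Qed.

Lemma qlin_scale s z : s ^+ (q * q) = s -> qlin (s * z) = s * qlin z.
Proof.
by move=> s_fixed; rewrite /qlin exprMn s_fixed mulrDr mulrCA [a ^+ q * _]mulrCA.
Qed.

Lemma qradical0 : 0 \in qradical.
Proof. by rewrite inE /qlin mulr0 add0r expr0n gtn_eqF // mulr0. Qed.

Lemma qradical_card_neq_p : #|qradical| != p.
Proof.
apply/eqP => card_rad.
have : (0 < #|qradical :\ (0 : F)%R|)%N.
  by move: (prime_gt1 p_pr); rewrite -card_rad (cardsD1 0%R) qradical0.
case/card_gt0P => z0; rewrite !inE => /andP[z0_neq0 /eqP qlin_z0].
pose w := qform z0; pose Fp : {set F} := [set (k : nat)%:R | k : 'I_p].
have w_neq0 : w != 0 by rewrite mulf_neq0 // expf_neq0.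
have w_q : w ^+ q = - w := qform_frob qlin_z0.
have w_notin_Fp : w \notin Fp.
  apply/imsetP => -[k _ w_k].
  have w2 : w *+ 2 = 0.
    by rewrite mulr2n {1}w_k -(natr_frob charFp r) -w_k w_q addNr.
  move/eqP: w2; rewrite -mulr_natr mulf_eq0 (negbTE natf2_neq0) orbF.
  exact/negP.
have fixed_Fpw : {in w |: Fp, forall s, s ^+ (q * q) = s}.
  move=> _ /setU1P[->|/imsetP[k _ ->]]; last by rewrite -expnD natr_frob.
  by rewrite exprM w_q exprNn_frob // w_q opprK.
have : (#|[set s * z0 | s in w |: Fp]%R| <= #|qradical|)%N.
  apply/subset_leq_card/subsetP => _ /imsetP[s Fpw_s ->].
  by rewrite inE qlin_scale ?fixed_Fpw // qlin_z0 mulr0.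
rewrite card_imset; last exact: mulIf.
rewrite cardsU1 w_notin_Fp card_imset ?card_ord ?card_rad ?ltnn //.
exact: natf_inj_ord.
Qed.

Lemma qform_not_near_bent : ~ near_bent p n (fun x => tr p n (qform x)).
Proof.
move=> /(_ 0); rewrite walsh_qform0 => -[/eqP|/eqP].
  rewrite pnatr_eq0 muln_eq0 expn_eq0 gtn_eqF //= cards_eq0 => /eqP rad0.
  by move: qradical0; rewrite rad0 inE.
rewrite eqr_nat expnSr eqn_pmul2l ?expn_gt0 ?p_gt0 //.
exact/negP/qradical_card_neq_p.
Qed.

End QuadraticForm.

End FiniteField.

Theorem theorem3 (p r n : nat) (F : finFieldType) (a : F) :
  prime p -> odd p -> (0 < r)%N -> (0 < n)%N -> #|F| = (p ^ n)%N -> a != 0 ->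
  ~ near_bent p n (fun x : F => tr p n (a * x ^+ (p ^ r + 1))).
Proof. by move=> p_pr p_odd _ n_gt0 cardF a_neq0; apply: qform_not_near_bent. Qed.
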